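(* Let $H$ be a connected graph of order $a \in \mathbb{N}$. Then for every $b \in \mathbb{N}$, $R_\mathrm{ord}(H, P_b^\mathrm{mon}) = 1 + (a-1)(b-1)$.
   Context: All graphs are finite, simple and undirected, and a graph of order $n$ has vertex set $\{0,1,\ldots,n-1\}$; $K_n$ is the complete graph on $\{0,\ldots,n-1\}$. A $2$-edge-coloring of $K_n$ assigns each edge a color in $\{1,2\}$. For a graph $H$ and such a coloring, an embedding of $H$ in color $j$ is an injective map $\varphi\colon V(H)\to V(K_n)$ such that for every edge $uv$ of $H$ the edge $\{\varphi(u),\varphi(v)\}$ has color $j$; it is increasing if $\varphi(0)<\varphi(1)<\cdots<\varphi(|H|-1)$. The ordered Ramsey number $R_\mathrm{ord}(H_1,H_2)$ is the smallest $n\in\mathbb{N}$ such that every $2$-edge-coloring of $K_n$ admits an increasing embedding of $H_1$ in color $1$ or an increasing embedding of $H_2$ in color $2$. The monotone path $P_n^\mathrm{mon}$ is the graph of order $n$ in which two vertices are adjacent iff they are consecutive integers. *)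

From mathcomp Require Import all_boot.
Set Implicit Arguments. Unset Strict Implicit. Unset Printing Implicit Defensive.

Definition simple_graph (n : nat) (G : rel 'I_n) : Prop :=
  symmetric G /\ irreflexive G.

Definition connected_graph (n : nat) (G : rel 'I_n) : Prop :=
  forall u v : 'I_n, connect G u v.

Definition mon_path (n : nat) : rel 'I_n :=
  fun u v => (u.+1 == v :> nat) || (v.+1 == u :> nat).

(* A 2-edge-colouring of K_n: a symmetric colour function on pairs of
   distinct vertices, with colours in {1,2} (values on the diagonal are
   irrelevant). *)
Definition two_coloring (n : nat) (c : 'I_n -> 'I_n -> nat) : Prop :=
  (forall x y, c x y = c y x) /\
  (forall x y, x != y -> c x y = 1 \/ c x y = 2).

Definition incr_embedding (m n : nat) (H : rel 'I_m) (c : 'I_n -> 'I_n -> nat)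
  (j : nat) (phi : 'I_m -> 'I_n) : Prop :=
  injective phi /\
  (forall u v, H u v -> c (phi u) (phi v) = j) /\
  (forall u v : 'I_m, (u < v)%N -> (phi u < phi v)%N).

Definition arrows (m1 m2 : nat) (H1 : rel 'I_m1) (H2 : rel 'I_m2) (n : nat) : Prop :=
  forall c : 'I_n -> 'I_n -> nat, two_coloring c ->
    (exists phi, incr_embedding H1 c 1 phi) \/ (exists psi, incr_embedding H2 c 2 psi).

Definition is_ord_ramsey (m1 m2 : nat) (H1 : rel 'I_m1) (H2 : rel 'I_m2) (N : nat) : Prop :=
  arrows H1 H2 N /\ (forall n, arrows H1 H2 n -> (N <= n)%N).
Arguments mon_path : clear implicits.

From mathcomp Require Import all_boot zify.
Set Implicit Arguments. Unset Strict Implicit.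

(* Upper bound: label every vertex v by the number of edges of a longest
   increasing colour-2 path starting at v.  If a label reaches b - 1 this path
   is a colour-2 monotone path on b vertices.  Otherwise there are only b - 1
   labels, so a label class has at least a vertices; a colour-2 edge u < v
   would force the label of u above that of v, so a class is a colour-1 clique,
   and its first a vertices carry an increasing copy of H.
   Lower bound: cut (a - 1)(b - 1) vertices into b - 1 consecutive blocks of
   a - 1 vertices, colouring inside blocks with 1 and across with 2.  A
   colour-1 copy of the connected H stays in one block, which is too small,
   and a colour-2 monotone path enters a new block at each step, so it has at
   most b - 1 vertices. *)

Lemma homo_ltn_ord m (f : 'I_m -> nat) :
  (forall i j : 'I_m, i.+1 = j :> nat -> f i < f j) -> {homo f : i j / i < j}.
Proof.
move=> step i [j lt_jm] /=; elim: j lt_jm => [//|j IHj] lt_jm.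
rewrite ltnS leq_eqVlt => /predU1P [eq_ij|lt_ij]; first by apply: step; rewrite /= eq_ij.
by apply: ltn_trans (IHj (ltnW lt_jm) lt_ij) _; apply: step.
Qed.

Lemma homo_ltn_ord_inj m (f : 'I_m -> nat) : {homo f : i j / i < j} -> injective f.
Proof.
move=> incr i j eq_f; apply/val_inj.
by case: (ltngtP i j) => [/incr|/incr|//]; rewrite eq_f ltnn.
Qed.

Lemma sorted_enum_ord n (A : {pred 'I_n}) : sorted ltn (map val (enum A)).
Proof.
rewrite sorted_map /enum_mem; apply: sorted_filter => [y x z|]; first exact: ltn_trans.
by rewrite -sorted_map -enumT val_enum_ord iota_ltn_sorted.
Qed.

Lemma increasing_enum n m (A : {pred 'I_n}) :
  m <= #|A| ->
  exists2 phi : 'I_m -> 'I_n, {homo phi : i j / i < j} & forall i, phi i \in A.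
Proof.
move=> le_mA; pose phi i := enum_val (widen_ord le_mA i).
exists phi => [i j lt_ij|i]; last exact: enum_valP.
have x0 : 'I_n := phi i.
have in_enum (k : 'I_m) : val k \in [pred k | k < size (map val (enum A))].
  by rewrite inE size_map -cardE (leq_trans (ltn_ord k)).
have := sorted_ltn_nth ltn_trans (val x0) (sorted_enum_ord A) _ _
  (in_enum i) (in_enum j) lt_ij.
by rewrite /phi !(nth_map x0) -?cardE ?(leq_trans (ltn_ord _) le_mA) // !(enum_val_nth x0).
Qed.

Lemma pigeonhole (T : finType) (f : T -> nat) k m :
  (forall x, f x < k) -> k * m < #|T| -> exists y, m < #|[set x | f x == y]|.
Proof.
move=> lt_fk; case: (boolP [exists y : 'I_k, m < #|[set x | f x == y]|]).
  by case/existsP=> y; exists (val y).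
rewrite negb_exists => /forallP small; rewrite ltnNge => /negP; case.
rewrite -sum1_card (partition_big (fun x => Ordinal (lt_fk x)) xpredT) //=.
rewrite -[k in k * m]card_ord -sum_nat_const; apply: leq_sum => y _.
rewrite sum1dep_card; have := small y; rewrite -leqNgt; apply: leq_trans.
by apply: subset_leq_card; apply/subsetP => x; rewrite !inE -val_eqE.
Qed.

Lemma homo_incr_embedding m n (H : rel 'I_m) (c : 'I_n -> 'I_n -> nat) j
    (phi : 'I_m -> 'I_n) :
  {homo phi : u v / u < v} -> (forall u v, H u v -> c (phi u) (phi v) = j) ->
  incr_embedding H c j phi.
Proof. by move=> incr col; split=> //; exact: inj_compr (homo_ltn_ord_inj incr). Qed.

Lemma clique_incr_embedding m n (H : rel 'I_m) (c : 'I_n -> 'I_n -> nat) j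
    (A : {pred 'I_n}) :
  irreflexive H -> {in A &, forall x y, x != y -> c x y = j} -> m <= #|A| ->
  exists phi, incr_embedding H c j phi.
Proof.
move=> irrH clique /increasing_enum [phi incr inA]; exists phi.
apply: homo_incr_embedding => // u v Huv; apply: clique => //.
by apply: contraTneq Huv => /(inj_compr (homo_ltn_ord_inj incr)) ->; rewrite irrH.
Qed.

Lemma path_incr_embedding n (c : 'I_n -> 'I_n -> nat) (j b : nat)
    (v : 'I_n) (s : seq 'I_n) :
  (forall x y, c x y = c y x) -> size s = b.-1 ->
  path [rel x y : 'I_n | (x < y) && (c x y == j)] v s ->
  exists psi, incr_embedding (mon_path b) c j psi.
Proof.
move=> csym size_s /(pathP v) step; pose psi (i : 'I_b) := nth v (v :: s) i.
have step_psi (i k : 'I_b) :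
    i.+1 = k :> nat -> (psi i < psi k) && (c (psi i) (psi k) == j).
  by move=> ik; have := step i; rewrite /psi -ik /=; apply; have := ltn_ord k; lia.
exists psi; apply: homo_incr_embedding.
  by apply: homo_ltn_ord => i k /step_psi /andP [].
move=> u w /orP [] /eqP uw; last rewrite csym.
  by have /andP [_ /eqP] := step_psi _ _ uw.
by have /andP [_ /eqP] := step_psi _ _ uw.
Qed.

Section LongestPath.

Variables (n : nat) (e : rel 'I_n).

(* Number of edges of a longest e-path v < w1 < w2 < ... starting at v; fuel
   n - v suffices since such a path has fewer than n - v edges. *)
Fixpoint longest_path_fuel (k : nat) (v : 'I_n) : nat :=
  if k is k'.+1 then \max_(w : 'I_n | (v < w) && e v w) (longest_path_fuel k' w).+1
  else 0.

Definition longest_path (v : 'I_n) : nat := longest_path_fuel (n - v) v.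

Lemma longest_path_fuel_stable k k' (v : 'I_n) :
  n - v <= k -> n - v <= k' -> longest_path_fuel k v = longest_path_fuel k' v.
Proof.
elim: k k' v => [|k IHk] [|k'] v ? ? //=; have lt_vn := ltn_ord v; try lia.
apply: eq_bigr => w /andP [lt_vw _]; congr _.+1; apply: IHk; have := ltn_ord w; lia.
Qed.

Lemma longest_pathE (v : 'I_n) :
  longest_path v = \max_(w : 'I_n | (v < w) && e v w) (longest_path w).+1.
Proof.
rewrite /longest_path; have lt_vn := ltn_ord v; case def_k: (n - v) => [|k] /=; first lia.
apply: eq_bigr => w /andP [lt_vw _]; congr _.+1.
by apply: longest_path_fuel_stable => //; have := ltn_ord w; lia.
Qed.

Lemma ltn_longest_path (v w : 'I_n) : v < w -> e v w -> longest_path w < longest_path v.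
Proof.
move=> lt_vw evw; rewrite [longest_path v]longest_pathE.
by apply: (leq_bigmax_cond w); rewrite lt_vw.
Qed.

Lemma longest_path_exists k (v : 'I_n) :
  k <= longest_path v ->
  exists2 s, size s = k & path [rel x y : 'I_n | (x < y) && e x y] v s.
Proof.
elim: k v => [|k IHk] v le_k; first by exists [::].
have [w up_vw long_vw] :
    exists2 w : 'I_n, (v < w) && e v w & longest_path v = (longest_path w).+1.
  have nonempty : 0 < #|[pred w : 'I_n | (v < w) && e v w]|.
    rewrite lt0n; apply: contraTneq le_k => /card0_eq none.
    by rewrite longest_pathE big_pred0 // => w; exact: none.
  have [w up_vw max_w] := eq_bigmax_cond (fun w => (longest_path w).+1) nonempty.
  by exists w; rewrite // longest_pathE max_w.
have [s size_s path_s] := IHk w ltac:(lia).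
by exists (w :: s); rewrite /= ?size_s ?up_vw.
Qed.

End LongestPath.

Definition block_coloring (n d : nat) (x y : 'I_n) : nat :=
  if x %/ d == y %/ d then 1 else 2.
Arguments block_coloring : clear implicits.

Lemma block_coloring_two (n d : nat) : two_coloring (block_coloring n d).
Proof. by split=> x y; rewrite /block_coloring; [rewrite eq_sym | case: ifP; auto]. Qed.

Lemma block_coloring_no_connected (m n d k : nat) (H : rel 'I_m)
    (phi : 'I_m -> 'I_n) :
  n <= d * k -> d < m -> connected_graph H ->
  ~ incr_embedding H (block_coloring n d) 1 phi.
Proof.
move=> le_n lt_dm connH [phi_inj [phi_col _]]; pose u0 := Ordinal lt_dm.
have d_gt0 : 0 < d by have := ltn_ord (phi u0); nia.
have same_block u : phi u %/ d = phi u0 %/ d.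
  have block_closed : closed H [pred u | phi u %/ d == phi u0 %/ d].
    by move=> v w /phi_col; rewrite /block_coloring !inE; case: ifP => // /eqP ->.
  by have := closed_connect block_closed (connH u0 u); rewrite !inE eqxx => /esym/eqP.
have offset_inj : injective (fun u => Ordinal (ltn_pmod (phi u) d_gt0)).
  move=> u v /(congr1 val) /= eq_mod; apply/phi_inj/val_inj.
  rewrite /= (divn_eq (phi u) d) (divn_eq (phi v) d).
  by rewrite (same_block u) (same_block v) eq_mod.
by have := leq_card _ offset_inj; rewrite !card_ord leqNgt lt_dm.
Qed.

Lemma block_coloring_no_mon_path (n d k : nat) (psi : 'I_k.+1 -> 'I_n) :
  n <= d * k -> ~ incr_embedding (mon_path k.+1) (block_coloring n d) 2 psi.
Proof.
move=> le_n [_ [psi_col psi_incr]].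
have d_gt0 : 0 < d by have := ltn_ord (psi ord0); nia.
have block_lt i : psi i %/ d < k.
  by rewrite ltn_divLR // mulnC (leq_trans (ltn_ord _) le_n).
have block_incr : {homo (fun i => psi i %/ d) : i j / i < j}.
  apply: homo_ltn_ord => i j ij.
  have : block_coloring n d (psi i) (psi j) = 2.
    by apply: psi_col; rewrite /mon_path ij eqxx.
  rewrite /block_coloring ltn_neqAle leq_div2r ?andbT; first by case: eqP.
  by apply/ltnW/psi_incr; rewrite -ij.
have block_inj : injective (fun i => Ordinal (block_lt i)).
  move=> i j /(congr1 val).
  exact: (@homo_ltn_ord_inj _ (fun i => psi i %/ d) block_incr).
by have := leq_card _ block_inj; rewrite !card_ord ltnn.
Qed.

Lemma arrows_lower a b n (H : rel 'I_a) :
  0 < a -> 0 < b -> connected_graph H -> arrows H (mon_path b) n ->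
  1 + (a - 1) * (b - 1) <= n.
Proof.
case: a H => [//|a] H _; case: b => [//|b] _ connH arr.
rewrite !subn1 add1n ltnNge; apply/negP => le_n.
have [[phi Hphi]|[psi Hpsi]] := arr _ (block_coloring_two n a).
  exact: block_coloring_no_connected le_n (ltnSn a) connH Hphi.
exact: block_coloring_no_mon_path le_n Hpsi.
Qed.

Lemma arrows_upper a b (H : rel 'I_a) :
  irreflexive H -> arrows H (mon_path b) (1 + (a - 1) * (b - 1)).
Proof.
set N := 1 + _; move=> irrH c [c_sym c_col]; pose e := [rel x y : 'I_N | c x y == 2].
case: (boolP [exists v, b - 1 <= longest_path e v]) => [/existsP [v long]|/existsPn short].
  right; have [s size_s path_s] := longest_path_exists long.
  by apply: path_incr_embedding c_sym _ path_s; rewrite size_s subn1.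
left; have lt_long v : longest_path e v < b - 1 by rewrite ltnNge short.
have many_vertices : (b - 1) * (a - 1) < #|'I_N| by rewrite card_ord /N mulnC.
have [y big_class] := pigeonhole lt_long many_vertices.
apply: clique_incr_embedding irrH _ (_ : a <= #|[set v | longest_path e v == y]|); last lia.
move=> u v; rewrite !inE => /eqP long_u /eqP long_v ne_uv.
case: (c_col _ _ ne_uv) => // c_uv; exfalso.
case: (ltngtP u v) => [lt_uv|lt_vu|/val_inj eq_uv]; last by rewrite eq_uv eqxx in ne_uv.
  have := ltn_longest_path (e := e) lt_uv (introT eqP c_uv).
  by rewrite long_u long_v ltnn.
rewrite c_sym in c_uv; have := ltn_longest_path (e := e) lt_vu (introT eqP c_uv).
by rewrite long_u long_v ltnn.
Qed.

Theorem theorem4p1 (a : nat) (H : rel 'I_a) :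
  (1 <= a)%N -> simple_graph H -> connected_graph H ->
  forall b : nat, (1 <= b)%N ->
    is_ord_ramsey H (mon_path b) (1 + (a - 1) * (b - 1)).
Proof.
move=> a_gt0 [_ irrH] connH b b_gt0; split; first exact: arrows_upper.
by move=> n; apply: arrows_lower a_gt0 b_gt0 connH.
Qed.
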